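(* Let $\mathbb T=\mathbb R/2\pi\mathbb Z$ with normalized Lebesgue measure $dx$, $(B_t)$ a one-dimensional Brownian motion, $(t,x)\mapsto\phi_t(x)$ smooth on $[0,1]\times\mathbb T$, $X_t$ the stochastic flow of diffeomorphisms solving the Stratonovich SDE $dX_t=\partial_x\phi_t(X_t)\circ dB_t$, $X_0(x)=x$, $\rho$ a smooth strictly positive probability density and $\rho_t$ the density of $(X_t)_\#(\rho\,dx)$. Set $\hat\rho_t=1/\big((\int_{\mathbb T}\frac{dx}{\rho_t})\rho_t\big)$, $a_t=\frac{\partial_x^2\phi_t}{\rho_t}(X_t)$, $b_t=\frac{\partial_x(\partial_x^2\phi_t\,\partial_x\phi_t)}{\rho_t}(X_t)$ and, for $f\in L^2(\rho\,dx)$, $$\Lambda(t,f)=-\Big(\int_{\mathbb T}fa_t\rho\,dx\Big)\hat\rho_t(X_t),$$ $$\Theta(t,f)=-\frac12\Big(\int_{\mathbb T}fa_t\rho\,dx\Big)(\hat\rho_t\partial_x^2\phi_t)(X_t)-\frac12\Big(\int_{\mathbb T}fb_t\rho\,dx\Big)\hat\rho_t(X_t)+\frac32\Big(\int_{\mathbb T}fa_t\rho\,dx\Big)\Big(\int_{\mathbb T}\partial_x^2\phi_t\,\hat\rho_t\,dx\Big)\hat\rho_t(X_t).$$ Then for all $t\in[0,1]$ and $f\in L^2(\rho\,dx)$, $$\|\Lambda(t,f)\|_{L^2(\rho dx)}\le\Big(\sup_{t\in[0,1]}\|\partial_x^2\phi_t\|_\infty\Big)\|f\|_{L^2(\rho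 dx)},$$ $$\|\Theta(t,f)\|_{L^2(\rho dx)}\le\Big(2\sup_{t\in[0,1]}\|\partial_x^2\phi_t\|_\infty^2+\sup_{t\in[0,1]}\|\partial_x(\partial_x^2\phi_t\,\partial_x\phi_t)\|_\infty\Big)\|f\|_{L^2(\rho dx)}.$$ *)

From HB Require Import structures.
From mathcomp Require Import all_boot all_order all_algebra.
From mathcomp Require Import all_classical all_reals all_analysis.
Set Implicit Arguments. Unset Strict Implicit. Unset Printing Implicit Defensive.
Import Order.TTheory GRing.Theory Num.Theory.
Import numFieldNormedType.Exports.
Local Open Scope classical_set_scope.
Local Open Scope ring_scope.

Section Torus.
Variable R : realType.

(* functions on T = R/2piZ are represented by their 2pi-periodic2pi lifts *)
Definition periodic2pi (g : R -> R) := forall x, g (x + 2 * pi) = g x.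

Definition Tdom : set R := `[0, 2 * pi[%classic.

Definition Tintegral (g : R -> R) : \bar R :=
  ((2 * pi)^-1)%:E * (\int[lebesgue_measure]_(x in Tdom) (g x)%:E)%E.

Definition Tint (g : R -> R) : R := fine (Tintegral g).

Definition L2sq (rho g : R -> R) : \bar R := Tintegral (fun x => g x ^+ 2 * rho x).

Definition L2norm (rho g : R -> R) : R := Num.sqrt (fine (L2sq rho g)).

Definition inL2 (rho f : R -> R) :=
  measurable_fun Tdom f /\ (L2sq rho f < +oo)%E.

Definition smooth1 (g : R -> R) :=
  forall n x, derivable (iter n (@derive1 R R) g) x 1.

Definition pdx (F : R -> R -> R) : R -> R -> R :=
  fun t x => derive1 (fun y => F t y) x.
Definition pdt (F : R -> R -> R) : R -> R -> R :=
  fun t x => derive1 (fun s => F s x) t.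

Fixpoint Ck2 (k : nat) (F : R -> R -> R) : Prop :=
  match k with
  | 0 => continuous (fun p : R * R => F p.1 p.2)
  | k'.+1 => continuous (fun p : R * R => F p.1 p.2) /\
     (forall t x, derivable (fun y => F t y) x 1 /\ derivable (fun s => F s x) t 1)
     /\ Ck2 k' (pdx F) /\ Ck2 k' (pdt F)
  end.

Definition smooth2 (F : R -> R -> R) := forall k, Ck2 k F.

(* orientation-preserving diffeomorphism of T isotopic to the identity,
   given by its lift to R *)
Definition Tdiffeo (X : R -> R) :=
  smooth1 X /\ (forall x, X (x + 2 * pi) = X x + 2 * pi) /\
  (forall x, 0 < derive1 X x).

(* rhot is the density (w.r.t. dx/(2pi)) of the pushforward X_# (rho dx) *)
Definition pushforward_density (X rho rhot : R -> R) :=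
  forall g : R -> R, measurable_fun setT g -> periodic2pi g -> (forall x, 0 <= g x) ->
    Tintegral (fun x => g x * rhot x) = Tintegral (fun x => g (X x) * rho x).

Definition d2x (phi : R -> R -> R) t x := pdx (pdx phi) t x.

Definition supnorm01 (G : R -> R -> R) : R :=
  sup [set r | exists t x, 0 <= t <= 1 /\ r = `|G t x|].

Definition rhohat (rhot : R -> R) : R -> R :=
  fun y => 1 / (Tint (fun x => (rhot x)^-1) * rhot y).

Definition a_fun (phi : R -> R -> R) (t : R) (X rhot : R -> R) : R -> R :=
  fun x => d2x phi t (X x) / rhot (X x).
Definition bnum (phi : R -> R -> R) (t : R) : R -> R :=
  fun y => derive1 (fun z => d2x phi t z * pdx phi t z) y.
Definition b_fun (phi : R -> R -> R) (t : R) (X rhot : R -> R) : R -> R :=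
  fun x => bnum phi t (X x) / rhot (X x).

Definition Lambda phi t X rho rhot (f : R -> R) : R -> R :=
  fun x => - (Tint (fun y => f y * a_fun phi t X rhot y * rho y)) * rhohat rhot (X x).

Definition Theta phi t X rho rhot (f : R -> R) : R -> R :=
  fun x =>
    - 2^-1 * Tint (fun y => f y * a_fun phi t X rhot y * rho y)
        * (rhohat rhot (X x) * d2x phi t (X x))
    - 2^-1 * Tint (fun y => f y * b_fun phi t X rhot y * rho y) * rhohat rhot (X x)
    + 3 / 2 * Tint (fun y => f y * a_fun phi t X rhot y * rho y)
        * Tint (fun y => d2x phi t y * rhohat rhot y) * rhohat rhot (X x).

End Torus.

(* Both operators factor as x |-> rhohat_t (X_t x) * v (X_t x), where v involves the
   scalars \int f a_t rho and \int f b_t rho.  Put K = \int 1/rho_t; K >= 1 because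
   \int rho_t = 1 and 1/r + r >= 2.  The change of variables y = X_t x turns
   \int rhohat_t(X_t)^2 rho into 1/K and \int a_t^2 rho into \int (d_x^2 phi_t)^2 / rho_t,
   which is at most S^2 K for S = sup |d_x^2 phi|.  By Cauchy-Schwarz,
   |\int f a_t rho| <= S ||f|| sqrt K, and the powers of K cancel in ||Lambda||^2.  For Theta
   one also needs |\int d_x^2 phi_t rhohat_t| <= S, which holds because rhohat_t is a
   probability density. *)
From HB Require Import structures.
From mathcomp Require Import all_boot all_order all_algebra.
From mathcomp Require Import all_classical all_reals all_analysis.
From mathcomp Require Import ring lra measurable_realfun.
Import Order.TTheory GRing.Theory Num.Theory.
Import numFieldNormedType.Exports.
Set Implicit Arguments. Unset Strict Implicit. Unset Printing Implicit Defensive.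
Local Open Scope classical_set_scope.
Local Open Scope ring_scope.

Lemma sqr_le_of_normr_le (R : realDomainType) (x S : R) : `|x| <= S -> x ^+ 2 <= S ^+ 2.
Proof.
move=> xS; rewrite -real_normK ?num_real // ler_sqr ?nnegrE //.
exact: le_trans (normr_ge0 x) xS.
Qed.

Section Continuity.
Variable R : realType.
Implicit Types f g : R -> R.

Lemma continuousT_add f g : continuous f -> continuous g -> continuous (fun x => f x + g x).
Proof. by move=> cf cg x; exact: (continuousD (cf x) (cg x)). Qed.

Lemma continuousT_mul f g : continuous f -> continuous g -> continuous (fun x => f x * g x).
Proof. by move=> cf cg x; exact: (continuousM (cf x) (cg x)). Qed.

Lemma continuousT_inv f : (forall x, f x != 0) -> continuous f ->
  continuous (fun x => (f x)^-1).
Proof. by move=> f0 cf x; exact: (continuousV (f0 x) (cf x)). Qed.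

Lemma continuousT_comp f g : continuous f -> continuous g -> continuous (fun x => g (f x)).
Proof. by move=> cf cg x; exact: (continuous_comp (cf x) (cg (f x))). Qed.

Lemma continuous_section (G : R -> R -> R) t :
  continuous (fun p : R * R => G p.1 p.2) -> continuous (G t).
Proof.
move=> cG x; apply: (@continuous_comp _ _ _ (pair t) (fun p : R * R => G p.1 p.2)).
  exact: (cvg_pair (cvg_cst t) cvg_id).
exact: cG.
Qed.

Lemma derivable_continuous f : (forall x, derivable f x 1) -> continuous f.
Proof. by move=> df x; apply: differentiable_continuous; exact/derivable1_diffP. Qed.

Lemma continuous_measurable_Tdom f : continuous f -> measurable_fun (@Tdom R) f.
Proof. by move=> cf; exact: measurable_funS (continuous_measurable_fun cf). Qed.

End Continuity.

Section Periodic.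
Variable R : realType.

Lemma pi2_gt0 : 0 < 2 * pi :> R.
Proof. by rewrite mulr_gt0 ?pi_gt0. Qed.

Lemma periodic2pi_shift (g : R -> R) : periodic2pi g ->
  forall (n : int) x, g (x + n%:~R * (2 * pi)) = g x.
Proof.
move=> pg; have shiftn (n : nat) x : g (x + n%:R * (2 * pi)) = g x.
  by rewrite mulr_natl; exact: periodicn.
case=> n x; first exact: shiftn.
by rewrite NegzE mulrNz mulNr -[in RHS](subrK (n.+1%:R * (2 * pi)) x) shiftn.
Qed.

Lemma periodic2pi_Tdom (g : R -> R) : periodic2pi g ->
  forall x, exists2 y, Tdom y & g x = g y.
Proof.
move=> pg x; set n := Num.floor (x / (2 * pi)).
have /andP[nx xn] := floor_itv (x / (2 * pi)).
exists (x + (- n)%:~R * (2 * pi)); last by rewrite (periodic2pi_shift pg).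
rewrite /Tdom /= in_itv /= mulrNz mulNr subr_ge0 -ler_pdivlMr ?pi2_gt0 // nx /=.
by rewrite ltrBlDl -[X in _ + X]mul1r -mulrDl -ltr_pdivrMr ?pi2_gt0 // -intrD1.
Qed.

Lemma bounded_periodic2pi (G : R -> R -> R) :
  continuous (fun p : R * R => G p.1 p.2) -> (forall s, periodic2pi (G s)) ->
  exists M, forall s x, 0 <= s <= 1 -> `|G s x| <= M.
Proof.
move=> cG pG.
have cD : compact (`[0, 1] `*` `[0, 2 * pi] : set (R * R)).
  by apply: compact_setX; exact: segment_compact.
have /compact_bounded/pinfty_ex_gt0[M _ HM] :=
  continuous_compact (continuous_subspaceT cG) cD.
exists M => s x s01; have [y Ty ->] := periodic2pi_Tdom (pG s) x.
apply: (HM (G s y)); exists (s, y) => //; split; rewrite /= in_itv //=.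
by move: Ty; rewrite /Tdom /= in_itv /= => /andP[-> /ltW].
Qed.

Lemma periodic2pi_derive1 (g : R -> R) : periodic2pi g -> periodic2pi (derive1 g).
Proof.
move=> pg x; rewrite /derive1.
suff -> : (fun h : R => h^-1 *: (g (h + (x + 2 * pi)) - g (x + 2 * pi))) =
  (fun h => h^-1 *: (g (h + x) - g x)) by [].
by apply/funext => h; rewrite addrA !pg.
Qed.

Lemma le_supnorm01 (G : R -> R -> R) :
  continuous (fun p : R * R => G p.1 p.2) -> (forall s, periodic2pi (G s)) ->
  forall s x, 0 <= s <= 1 -> `|G s x| <= supnorm01 G.
Proof.
move=> cG pG s x s01; have [M HM] := bounded_periodic2pi cG pG.
apply: sup_upper_bound; last by exists s, x.
split; first by exists `|G s x|, s, x.
by exists M => _ [s' [x' [s'01 ->]]]; exact: HM.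
Qed.

End Periodic.

Section SmoothPotential.
Variables (R : realType) (phi : R -> R -> R).
Hypotheses (phi_smooth : smooth2 phi) (phi_periodic : forall s, periodic2pi (phi s)).

Lemma continuous_pdx : continuous (fun p : R * R => pdx phi p.1 p.2).
Proof. by case: (phi_smooth 1%N) => _ [_ [cpdx _]]. Qed.

Lemma continuous_d2x : continuous (fun p : R * R => d2x phi p.1 p.2).
Proof. by case: (phi_smooth 2%N) => _ [_ [[_ [_ [cd2x _]]] _]]. Qed.

Lemma bnumE t y :
  bnum phi t y = d2x phi t y ^+ 2 + pdx phi t y * pdx (d2x phi) t y.
Proof.
case: (phi_smooth 3%N) => _ [_ [[_ [dpdx [[_ [dd2x _]] _]]] _]].
by rewrite /bnum derive1E (deriveM (dd2x t y).1 (dpdx t y).1) -!derive1E expr2.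
Qed.

Lemma continuous_bnum : continuous (fun p : R * R => bnum phi p.1 p.2).
Proof.
have c3 : continuous (fun p : R * R => pdx (d2x phi) p.1 p.2).
  by case: (phi_smooth 3%N) => _ [_ [[_ [_ [[_ [_ [cd3x _]]] _]]] _]].
have -> : (fun p : R * R => bnum phi p.1 p.2) = (fun p =>
    d2x phi p.1 p.2 * d2x phi p.1 p.2 + pdx phi p.1 p.2 * pdx (d2x phi) p.1 p.2).
  by apply/funext => p; rewrite bnumE expr2.
have c1 := continuous_d2x; have c2 := continuous_pdx.
by move=> p; exact: (continuousD (continuousM (c1 p) (c1 p)) (continuousM (c2 p) (c3 p))).
Qed.

Lemma periodic2pi_pdx s : periodic2pi (pdx phi s).
Proof. exact: periodic2pi_derive1. Qed.

Lemma periodic2pi_d2x s : periodic2pi (d2x phi s).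
Proof. exact/periodic2pi_derive1/periodic2pi_pdx. Qed.

Lemma le_supnorm01_d2x s x : 0 <= s <= 1 -> `|d2x phi s x| <= supnorm01 (d2x phi).
Proof. exact: le_supnorm01 continuous_d2x periodic2pi_d2x s x. Qed.

Lemma le_supnorm01_bnum s x : 0 <= s <= 1 -> `|bnum phi s x| <= supnorm01 (bnum phi).
Proof.
apply: le_supnorm01 continuous_bnum _ s x => s'; apply: periodic2pi_derive1 => y /=.
by rewrite periodic2pi_d2x periodic2pi_pdx.
Qed.

End SmoothPotential.

Section TorusIntegral.
Variable R : realType.
Implicit Types g h : R -> R.
Local Notation TD := (@Tdom R).

Lemma measurable_Tdom : measurable TD.
Proof. exact: measurable_itv. Qed.

Lemma inv_pi2_ge0 : 0 <= (2 * pi)^-1 :> R.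
Proof. by rewrite invr_ge0 ltW ?pi2_gt0. Qed.

Lemma Tintegral_ge0 g : (forall x, TD x -> 0 <= g x) -> (0 <= Tintegral g)%E.
Proof.
move=> g0; rewrite /Tintegral mule_ge0 ?lee_fin ?inv_pi2_ge0 //.
by apply: integral_ge0 => x Dx; rewrite lee_fin g0.
Qed.

Lemma ge0_le_Tintegral g h : measurable_fun TD g -> measurable_fun TD h ->
  (forall x, TD x -> 0 <= g x) -> (forall x, TD x -> g x <= h x) ->
  (Tintegral g <= Tintegral h)%E.
Proof.
move=> mg mh g0 gh; rewrite /Tintegral lee_wpmul2l ?lee_fin ?inv_pi2_ge0 //.
apply: ge0_le_integral; first exact: measurable_Tdom.
- by move=> x Dx; rewrite lee_fin g0.
- exact/measurable_EFinP.
- exact/measurable_EFinP.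
- by move=> x Dx; rewrite lee_fin gh.
Qed.

Lemma ge0_TintegralD g h : measurable_fun TD g -> measurable_fun TD h ->
  (forall x, TD x -> 0 <= g x) -> (forall x, TD x -> 0 <= h x) ->
  Tintegral (fun x => g x + h x) = (Tintegral g + Tintegral h)%E.
Proof.
move=> mg mh g0 h0; rewrite /Tintegral -ge0_muleDr; first last.
- by apply: integral_ge0 => x Dx; rewrite lee_fin h0.
- by apply: integral_ge0 => x Dx; rewrite lee_fin g0.
congr (_ * _)%E; under eq_integral do rewrite EFinD.
apply: ge0_integralD; first exact: measurable_Tdom.
- by move=> x Dx; rewrite lee_fin g0.
- exact/measurable_EFinP.
- by move=> x Dx; rewrite lee_fin h0.
- exact/measurable_EFinP.
Qed.

Lemma ge0_TintegralZl (k : R) g : 0 <= k -> measurable_fun TD g ->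
  (forall x, TD x -> 0 <= g x) ->
  Tintegral (fun x => k * g x) = (k%:E * Tintegral g)%E.
Proof.
move=> k0 mg g0; rewrite /Tintegral muleCA; congr (_ * _)%E.
under eq_integral do rewrite EFinM.
apply: ge0_integralZl_EFin k0; first exact: measurable_Tdom.
- by move=> x Dx; rewrite lee_fin g0.
- exact/measurable_EFinP.
Qed.

Lemma Tintegral_cst (k : R) : Tintegral (fun _ => k) = k%:E.
Proof.
rewrite /Tintegral.
have -> : (\int[lebesgue_measure]_(x in TD) k%:E = k%:E * lebesgue_measure TD)%E.
  by rewrite -(integral_cst lebesgue_measure measurable_Tdom).
rewrite /Tdom lebesgue_measure_itv /= lte_fin pi2_gt0 /= -EFinD -!EFinM; congr EFin.
by rewrite oppr0 addr0 mulrCA mulVf ?mulr1 // gt_eqF ?pi2_gt0.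
Qed.

Lemma le_abse_Tintegral g : measurable_fun TD g ->
  (`|Tintegral g| <= Tintegral (fun x => `|g x|%R))%E.
Proof.
move=> mg; rewrite /Tintegral abseM abse_EFin ger0_norm ?inv_pi2_ge0 //.
rewrite lee_wpmul2l ?lee_fin ?inv_pi2_ge0 //.
under [X in (_ <= X)%E]eq_integral do rewrite -abse_EFin.
by apply: le_abse_integral; [exact: measurable_Tdom | exact/measurable_EFinP].
Qed.

Lemma le_Tint_abs g h (H : R) : measurable_fun TD g -> measurable_fun TD h ->
  (forall x, TD x -> `|g x| <= h x) -> Tintegral h = H%:E -> `|Tint g| <= H.
Proof.
move=> mg mh gh hH; rewrite /Tint.
suff : (`|Tintegral g| <= H%:E)%E.
  by case: (Tintegral g) => [r| |] //=; rewrite abse_EFin lee_fin.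
rewrite -hH; apply: le_trans (le_abse_Tintegral mg) _.
by apply: ge0_le_Tintegral => //; exact: measurableT_comp.
Qed.

Lemma Tintegral_fine g : continuous g -> periodic2pi g -> (forall x, 0 <= g x) ->
  Tintegral g = (Tint g)%:E.
Proof.
move=> cg pg g0.
have cG : continuous (fun p : R * R => g p.2).
  by move=> p; apply: continuous_comp; [exact: cvg_snd | exact: cg].
have [M HM] := bounded_periodic2pi cG (fun=> pg).
have : (Tintegral g <= M%:E)%E.
  rewrite -Tintegral_cst; apply: ge0_le_Tintegral.
  - exact: continuous_measurable_Tdom.
  - exact: measurable_cst.
  - by move=> x _; exact: g0.
  - by move=> x _; rewrite (le_trans (ler_norm _) (HM 0 x _)) ?lexx ?ler01.
have := Tintegral_ge0 (fun x _ => g0 x).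
by rewrite /Tint; case: (Tintegral g).
Qed.

End TorusIntegral.

Section CauchySchwarz.
Variable R : realType.
Local Notation TD := (@Tdom R).

Lemma amgm_scaled (l a b : R) : 0 < l -> 2 * a * b <= l * a ^+ 2 + l^-1 * b ^+ 2.
Proof.
move=> l0; rewrite -subr_ge0.
have -> : l * a ^+ 2 + l^-1 * b ^+ 2 - 2 * a * b = l^-1 * (l * a - b) ^+ 2.
  by field; rewrite gt_eqF.
by rewrite mulr_ge0 ?sqr_ge0 // invr_ge0 ltW.
Qed.

Lemma sqr_le_mul_of_amgm (F G c : R) : 0 <= F -> 0 <= G ->
  (forall l, 0 < l -> `|c| <= 2^-1 * (l * F + l^-1 * G)) -> c ^+ 2 <= F * G.
Proof.
move=> F0 G0 amgm; rewrite -real_normK ?num_real //.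
have [c0|c_neq0] := eqVneq c 0; first by rewrite c0 normr0 expr0n mulr_ge0.
have a0 : 0 < `|c| by rewrite normr_gt0.
have [F00|F_neq0] := eqVneq F 0.
  (* with l = G / |c| + 1 the hypothesis reads |c| <= G / (2 l) < |c| / 2 *)
  have l0 : 0 < G / `|c| + 1 by rewrite ltr_wpDl // divr_ge0 // ltW.
  have := amgm _ l0; rewrite F00 mulr0 add0r.
  have : (G / `|c| + 1) * (G / `|c| + 1)^-1 = 1 by rewrite mulfV // gt_eqF.
  have : (G / `|c|) * `|c| = G by rewrite mulfVK // gt_eqF.
  nra.
have Fp : 0 < F by rewrite lt_def F_neq0.
(* the optimal choice l = |c| / F *)
have := amgm _ (divr_gt0 a0 Fp).
have -> : `|c| / F * F = `|c| by rewrite mulfVK // gt_eqF.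
have -> : (`|c| / F)^-1 * G = F * G / `|c| by rewrite invf_div mulrAC.
have : F * G / `|c| * `|c| = F * G by rewrite mulfVK // gt_eqF.
nra.
Qed.

Lemma Tint_cauchy_schwarz (rho f w h : R -> R) (F G : R) :
  measurable_fun TD f -> measurable_fun TD w -> measurable_fun TD rho ->
  measurable_fun TD h -> (forall x, 0 <= rho x) ->
  (forall x, w x ^+ 2 * rho x <= h x) ->
  L2sq rho f = F%:E -> Tintegral h = G%:E ->
  Tint (fun y => f y * w y * rho y) ^+ 2 <= F * G.
Proof.
move=> mf mw mrho mh rho0 wh LF TG.
have h0 x : 0 <= h x by apply: le_trans (wh x); rewrite mulr_ge0 ?sqr_ge0.
have f2rho0 x : 0 <= f x ^+ 2 * rho x by rewrite mulr_ge0 ?sqr_ge0.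
have mf2rho : measurable_fun TD (fun x => f x ^+ 2 * rho x).
  by apply: measurable_funM => //; exact: measurable_funX.
have F0 : 0 <= F by rewrite -lee_fin -LF; exact: Tintegral_ge0.
have G0 : 0 <= G by rewrite -lee_fin -TG; exact: Tintegral_ge0.
apply: sqr_le_mul_of_amgm => // l l0.
have li0 : 0 <= l^-1 by rewrite invr_ge0 ltW.
apply: (le_Tint_abs (h := fun x => 2^-1 * (l * (f x ^+ 2 * rho x) + l^-1 * h x))).
- by apply: measurable_funM => //; apply: measurable_funM.
- apply: measurable_funM; first exact: measurable_cst.
  by apply: measurable_funD; apply: measurable_funM => //; exact: measurable_cst.
- move=> x _; rewrite !normrM (ger0_norm (rho0 x)).
  have := amgm_scaled `|f x| `|w x| l0; rewrite !real_normK ?num_real //.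
  have := wh x; have := rho0 x; have := normr_ge0 (f x); have := normr_ge0 (w x).
  nra.
rewrite ge0_TintegralZl ?invr_ge0 //; last 2 first.
- by apply: measurable_funD; apply: measurable_funM => //; exact: measurable_cst.
- by move=> x _; apply: addr_ge0; apply: mulr_ge0; rewrite ?(ltW l0) ?f2rho0 ?h0.
rewrite ge0_TintegralD; last 4 first.
- by apply: measurable_funM => //; exact: measurable_cst.
- by apply: measurable_funM => //; exact: measurable_cst.
- by move=> x _; apply: mulr_ge0; rewrite ?(ltW l0) ?f2rho0.
- by move=> x _; apply: mulr_ge0; rewrite ?h0.
rewrite !ge0_TintegralZl ?(ltW l0) //.
by rewrite -[Tintegral _]/(L2sq rho f) LF TG.
Qed.

End CauchySchwarz.

Section PushforwardDensity.
Variable R : realType.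
Variables rho X rhot : R -> R.
Hypotheses (rho_cont : continuous rho) (rho_gt0 : forall x, 0 < rho x)
  (rho_Tint1 : Tintegral rho = 1%E) (X_cont : continuous X)
  (rhot_cont : continuous rhot) (rhot_periodic : periodic2pi rhot)
  (rhot_gt0 : forall x, 0 < rhot x) (push : pushforward_density X rho rhot).

Local Notation K := (Tint (fun x => (rhot x)^-1)).
Local Notation rh := (rhohat rhot).

Let rhot_neq0 x : rhot x != 0. Proof. by rewrite gt_eqF. Qed.

Let continuous_inv_rhot : continuous (fun y => (rhot y)^-1).
Proof. exact: continuousT_inv. Qed.

Lemma Tintegral_push g : continuous g -> periodic2pi g -> (forall y, 0 <= g y) ->
  Tintegral (fun x => g (X x) * rho x) = Tintegral (fun y => g y * rhot y).
Proof. by move=> cg pg g0; rewrite push //; exact: continuous_measurable_fun. Qed.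

Lemma Tintegral_rhot : Tintegral rhot = 1%E.
Proof.
have c1 : continuous (fun _ : R => 1 : R) by exact: cst_continuous.
have := Tintegral_push c1 (fun=> erefl) (fun=> ler01).
by rewrite !(eq_fun (fun x => mul1r _)) rho_Tint1.
Qed.

Lemma Tintegral_inv_rhot : Tintegral (fun y => (rhot y)^-1) = K%:E.
Proof.
apply: Tintegral_fine => // [y|y]; first by rewrite rhot_periodic.
by rewrite invr_ge0 ltW.
Qed.

Lemma Tint_inv_rhot_ge1 : 1 <= K.
Proof.
have : (Tintegral (fun=> 2%R) <= Tintegral (fun y => (rhot y)^-1 + rhot y)%R)%E.
  apply: ge0_le_Tintegral.
  - exact: measurable_cst.
  - by apply: continuous_measurable_Tdom; exact: continuousT_add.
  - by move=> y _; exact: ler0n.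
  - move=> y _; have r0 := rhot_gt0 y; rewrite -subr_ge0.
    have -> : (rhot y)^-1 + rhot y - 2 = (rhot y)^-1 * (rhot y - 1) ^+ 2 by field.
    by rewrite mulr_ge0 ?sqr_ge0 // invr_ge0 ltW.
rewrite Tintegral_cst ge0_TintegralD; first last.
- by move=> y _; exact: ltW.
- by move=> y _; rewrite invr_ge0 ltW.
- exact: continuous_measurable_Tdom.
- exact: continuous_measurable_Tdom.
by rewrite Tintegral_inv_rhot Tintegral_rhot -EFinD lee_fin => ?; lra.
Qed.

Lemma Tint_inv_rhot_gt0 : 0 < K.
Proof. exact: lt_le_trans ltr01 Tint_inv_rhot_ge1. Qed.

Lemma rhohatE y : rh y = K^-1 * (rhot y)^-1.
Proof. by rewrite /rhohat mul1r invfM. Qed.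

Lemma rhohat_gt0 y : 0 < rh y.
Proof. by rewrite rhohatE mulr_gt0 ?invr_gt0 ?Tint_inv_rhot_gt0. Qed.

Lemma continuous_rhohat : continuous rh.
Proof.
rewrite (funext rhohatE); apply: continuousT_mul => //; exact: cst_continuous.
Qed.

Lemma periodic2pi_rhohat : periodic2pi rh.
Proof. by move=> y; rewrite !rhohatE rhot_periodic. Qed.

Lemma Tintegral_rhohat : Tintegral rh = 1%E.
Proof.
rewrite (funext rhohatE) ge0_TintegralZl ?invr_ge0 ?(ltW Tint_inv_rhot_gt0) //.
- by rewrite Tintegral_inv_rhot -EFinM mulVf // gt_eqF ?Tint_inv_rhot_gt0.
- exact: continuous_measurable_Tdom.
- by move=> y _; rewrite invr_ge0 ltW.
Qed.

Lemma Tintegral_rhohat_comp_sqr : Tintegral (fun x => rh (X x) ^+ 2 * rho x) = (K^-1)%:E.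
Proof.
have K0 := Tint_inv_rhot_gt0.
rewrite (Tintegral_push (g := fun y => rh y ^+ 2)); last 3 first.
- exact: continuousT_mul continuous_rhohat continuous_rhohat.
- by move=> y; rewrite periodic2pi_rhohat.
- by move=> y; exact: sqr_ge0.
have -> : (fun y => rh y ^+ 2 * rhot y) = (fun y => K^-2 * (rhot y)^-1).
  by apply/funext => y; rewrite rhohatE; field; rewrite rhot_neq0 gt_eqF.
rewrite ge0_TintegralZl ?invr_ge0 ?sqr_ge0 //.
- by rewrite Tintegral_inv_rhot -EFinM; congr EFin; field; rewrite gt_eqF.
- exact: continuous_measurable_Tdom.
- by move=> y _; rewrite invr_ge0 ltW.
Qed.

Lemma Tintegral_inv_rhot_comp_sqr :
  Tintegral (fun x => (rhot (X x) ^+ 2)^-1 * rho x) = K%:E.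
Proof.
rewrite (Tintegral_push (g := fun y => (rhot y ^+ 2)^-1)); last 3 first.
- apply: continuousT_inv; first by move=> y; rewrite sqrf_eq0.
  exact: continuousT_mul.
- by move=> y; rewrite rhot_periodic.
- by move=> y; rewrite invr_ge0 sqr_ge0.
by rewrite -Tintegral_inv_rhot; congr Tintegral; apply/funext => y; field.
Qed.

Let continuous_inv_rhot_comp_sqr : continuous (fun x => (rhot (X x) ^+ 2)^-1).
Proof.
apply: continuousT_inv; first by move=> x; rewrite sqrf_eq0.
have -> : (fun x => rhot (X x) ^+ 2) = (fun x => rhot (X x) * rhot (X x)).
  by apply/funext => x; rewrite expr2.
by apply: continuousT_mul; exact: continuousT_comp.
Qed.

Lemma abs_Tint_mul_rhohat_le (g : R -> R) (S : R) :
  continuous g -> (forall y, `|g y| <= S) -> `|Tint (fun y => g y * rh y)| <= S.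
Proof.
move=> cg gS; have S0 : 0 <= S := le_trans (normr_ge0 _) (gS 0).
have mrh : measurable_fun (@Tdom R) rh := continuous_measurable_Tdom continuous_rhohat.
apply: (le_Tint_abs (h := fun y => S * rh y)).
- exact: continuous_measurable_Tdom (continuousT_mul cg continuous_rhohat).
- by apply: measurable_funM => //; exact: measurable_cst.
- by move=> y _; rewrite normrM (gtr0_norm (rhohat_gt0 y)) ler_wpM2r // ltW ?rhohat_gt0.
- rewrite ge0_TintegralZl // ?Tintegral_rhohat ?mule1 // => y _.
  exact/ltW/rhohat_gt0.
Qed.

Lemma abs_Tint_weight_le (f g : R -> R) (S : R) :
  measurable_fun (@Tdom R) f -> (L2sq rho f < +oo)%E ->
  continuous g -> (forall y, `|g y| <= S) ->
  `|Tint (fun x => f x * (g (X x) / rhot (X x)) * rho x)|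
    <= S * (L2norm rho f * Num.sqrt K).
Proof.
move=> mf Lf cg gS; have S0 : 0 <= S := le_trans (normr_ge0 _) (gS 0).
have K0 := Tint_inv_rhot_gt0.
set F := fine (L2sq rho f).
have f2rho0 x : 0 <= f x ^+ 2 * rho x by rewrite mulr_ge0 ?sqr_ge0 ?ltW.
have LF : L2sq rho f = F%:E by rewrite fineK // ge0_fin_numE // Tintegral_ge0.
have F0 : 0 <= F by rewrite -lee_fin -LF Tintegral_ge0.
have mrhoX : measurable_fun (@Tdom R) (fun x => (rhot (X x) ^+ 2)^-1 * rho x).
  by apply: continuous_measurable_Tdom; apply: continuousT_mul.
have CS : Tint (fun x => f x * (g (X x) / rhot (X x)) * rho x) ^+ 2 <= F * (S ^+ 2 * K).
  apply: (Tint_cauchy_schwarz (h := fun x => S ^+ 2 * ((rhot (X x) ^+ 2)^-1 * rho x))) => //.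
  - apply: continuous_measurable_Tdom; apply: continuousT_mul; first exact: continuousT_comp.
    by apply: continuousT_inv => // x; apply: continuousT_comp.
  - exact: continuous_measurable_Tdom.
  - by apply: measurable_funM => //; exact: measurable_cst.
  - by move=> x; exact/ltW.
  - move=> x; rewrite expr_div_n mulrA ler_wpM2r ?(ltW (rho_gt0 x)) //.
    by rewrite ler_wpM2r ?invr_ge0 ?sqr_ge0 // sqr_le_of_normr_le.
  - rewrite ge0_TintegralZl ?Tintegral_inv_rhot_comp_sqr ?sqr_ge0 // => x _.
    by rewrite mulr_ge0 ?invr_ge0 ?sqr_ge0 ?ltW.
have -> : S * (L2norm rho f * Num.sqrt K) = Num.sqrt (F * (S ^+ 2 * K)).
  by rewrite sqrtrM // sqrtrM ?sqr_ge0 // sqrtr_sqr ger0_norm // mulrCA.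
by rewrite -sqrtr_sqr ler_wsqrtr.
Qed.

Lemma L2sq_rhohat_comp_le (u v : R -> R) (C : R) : continuous v ->
  (forall y, `|v y| <= C * Num.sqrt K) -> (forall x, u x = rh (X x) * v (X x)) ->
  (L2sq rho u <= (C ^+ 2)%:E)%E.
Proof.
move=> cv vC uE; have K0 := Tint_inv_rhot_gt0.
have crhX : continuous (fun x => rh (X x)).
  exact: continuousT_comp X_cont continuous_rhohat.
have -> : C ^+ 2 = C ^+ 2 * K * K^-1 by rewrite mulfK // gt_eqF.
rewrite EFinM -Tintegral_rhohat_comp_sqr -ge0_TintegralZl; first last.
- by move=> x _; rewrite mulr_ge0 ?sqr_ge0 ?ltW.
- by apply: continuous_measurable_Tdom; do 2?apply: continuousT_mul.
- by rewrite mulr_ge0 ?sqr_ge0 ?ltW.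
rewrite /L2sq (funext uE); apply: ge0_le_Tintegral.
- apply: continuous_measurable_Tdom; apply: continuousT_mul => //.
  by apply: continuousT_mul; apply: continuousT_mul => //; exact: continuousT_comp.
- apply: continuous_measurable_Tdom; apply: continuousT_mul; first exact: cst_continuous.
  by do 2?apply: continuousT_mul.
- by move=> x _; rewrite mulr_ge0 ?sqr_ge0 ?ltW.
- move=> x _; have v2 : v (X x) ^+ 2 <= C ^+ 2 * K.
    by apply: le_trans (sqr_le_of_normr_le (vC _)) _; rewrite exprMn sqr_sqrtr // ltW.
  rewrite exprMn mulrAC mulrC; apply: ler_wpM2r v2.
  by rewrite mulr_ge0 ?sqr_ge0 ?ltW.
Qed.

End PushforwardDensity.

Lemma Theta_coef_le (R : realFieldType) (c d D e S Sb w : R) :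
  `|c| <= S * w -> `|d| <= Sb * w -> `|D| <= S -> `|e| <= S ->
  `|- 2^-1 * c * D - 2^-1 * d + 3 / 2 * c * e| <= (2 * S ^+ 2 + Sb) * w.
Proof.
move=> cS dS DS eS.
have S0 : 0 <= S := le_trans (normr_ge0 D) DS.
have Sbw0 : 0 <= Sb * w := le_trans (normr_ge0 d) dS.
have cD : `|c| * `|D| <= S * w * S by rewrite ler_pM.
have ce : `|c| * `|e| <= S * w * S by rewrite ler_pM.
have n2 : `|2^-1 : R| = 2^-1 by rewrite ger0_norm // invr_ge0.
have n3 : `|3 : R| = 3 by rewrite ger0_norm.
apply: le_trans (ler_normD _ _) _; apply: le_trans (lerD (ler_normB _ _) (lexx _)) _.
rewrite !normrM normrN n2 n3; lra.
Qed.

Theorem lemma4p4 (R : realType) (phi : R -> R -> R) (rho : R -> R)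
  (t : R) (X rhot : R -> R) (f : R -> R) :
  smooth2 phi -> (forall s, periodic2pi (phi s)) ->
  smooth1 rho -> periodic2pi rho -> (forall x, 0 < rho x) ->
  Tintegral rho = 1%E ->
  0 <= t <= 1 ->
  Tdiffeo X ->
  measurable_fun setT rhot -> continuous rhot -> periodic2pi rhot ->
  (forall x, 0 < rhot x) ->
  pushforward_density X rho rhot ->
  inL2 rho f ->
  (L2sq rho (Lambda phi t X rho rhot f)
     <= ((supnorm01 (d2x phi) * L2norm rho f) ^+ 2)%:E)%E /\
  (L2sq rho (Theta phi t X rho rhot f)
     <= (((2 * supnorm01 (d2x phi) ^+ 2 + supnorm01 (bnum phi)) * L2norm rho f) ^+ 2)%:E)%E.
Proof.
move=> phi_smooth phi_per rho_smooth _ rho_gt0 rho_Tint1 t01 [X_smooth _] _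
  rhot_cont rhot_per rhot_gt0 push [mf Lf].
have X_cont : continuous X := derivable_continuous (X_smooth 0%N).
have rho_cont : continuous rho := derivable_continuous (rho_smooth 0%N).
have d2x_cont : continuous (d2x phi t) := continuous_section (continuous_d2x phi_smooth).
have bnum_cont : continuous (bnum phi t) := continuous_section (continuous_bnum phi_smooth).
have d2xS y := le_supnorm01_d2x phi_smooth phi_per y t01.
have bnumS y := le_supnorm01_bnum phi_smooth phi_per y t01.
set S := supnorm01 (d2x phi) in d2xS *; set Sb := supnorm01 (bnum phi) in bnumS *.
set w := L2norm rho f * Num.sqrt (Tint (fun y => (rhot y)^-1)).
set c := Tint (fun y => f y * a_fun phi t X rhot y * rho y).
set d := Tint (fun y => f y * b_fun phi t X rhot y * rho y).
set e := Tint (fun y => d2x phi t y * rhohat rhot y).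
have c_le : `|c| <= S * w by apply: abs_Tint_weight_le.
have d_le : `|d| <= Sb * w by apply: abs_Tint_weight_le.
have e_le : `|e| <= S by apply: (abs_Tint_mul_rhohat_le (rho := rho) (X := X)).
have L2sq_le := L2sq_rhohat_comp_le rho_cont rho_gt0 rho_Tint1 X_cont rhot_cont
  rhot_per rhot_gt0 push.
split.
- apply: (L2sq_le _ (fun=> - c)) => // [|y|x].
  + exact: cst_continuous.
  + by rewrite normrN -mulrA.
  + by rewrite /Lambda -/c mulrC.
- apply: (L2sq_le _ (fun y => - 2^-1 * c * d2x phi t y - 2^-1 * d + 3 / 2 * c * e))
    => // [|y|x].
  + do 2![apply: continuousT_add; last exact: cst_continuous].
    by apply: continuousT_mul => //; exact: cst_continuous.
  + apply: le_trans (Theta_coef_le c_le d_le (d2xS y) e_le) _.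
    by rewrite /w mulrA.
  + by rewrite /Theta -/c -/d -/e; ring.
Qed.
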